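(* Let $K$ be a number field with $\sqrt{2}\in K$. Then there are infinitely many points $(x,y)\in K^2$ such that each of the squared distances $x^2+y^2$, $x^2+(1-y)^2$, $(1-x)^2+y^2$, $(1-x)^2+(1-y)^2$ to the vertices $(0,0),(0,1),(1,0),(1,1)$ of the unit square is the square of an element of $K$.
   Context: A distance is called $K$-rational if it lies in $K$. For a point with coordinates in $K$, the distance to a vertex of the unit square is $K$-rational exactly when the corresponding squared distance is the square of an element of $K$. *)

From HB Require Import structures.
From mathcomp Require Import all_boot all_order all_algebra all_field.
Set Implicit Arguments. Unset Strict Implicit. Unset Printing Implicit Defensive.
Import GRing.Theory.
Local Open Scope ring_scope.

(* A number field is modelled as K : fieldExtType rat, i.e. a field that is a
   finite-dimensional algebra over Q. *)

Definition is_square (K : fieldType) (a : K) : Prop := exists b : K, a = b ^+ 2.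

Definition unit_square_rational (K : fieldType) (p : K * K) : Prop :=
  let x := p.1 in let y := p.2 in
  [/\ is_square (x ^+ 2 + y ^+ 2),
      is_square (x ^+ 2 + (1 - y) ^+ 2),
      is_square ((1 - x) ^+ 2 + y ^+ 2) &
      is_square ((1 - x) ^+ 2 + (1 - y) ^+ 2)].

Definition infinitely_many (T : eqType) (P : T -> Prop) : Prop :=
  ~ exists s : seq T, forall t, P t -> t \in s.

From HB Require Import structures.
From mathcomp Require Import all_boot all_order all_algebra all_field.
From mathcomp Require Import ring.
Set Implicit Arguments. Unset Strict Implicit. Unset Printing Implicit Defensive.
Local Open Scope ring_scope.
Import GRing.Theory Num.Theory.

(* Search on the diagonal x = y: the squared distances to (0,0) and (1,1) are
   2 t^2 and 2 (1 - t)^2, squares because sqrt 2 lies in K, while the other two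
   both equal t^2 + (1 - t)^2.  Making this a square is a Pythagorean condition
   on (t, 1 - t), solved by a one-parameter family of triples; evaluating the
   parameter at 0, 1, 2, ... gives pairwise distinct points since K has
   characteristic 0. *)

Lemma infinitely_many_inj (T : eqType) (P : T -> Prop) (f : nat -> T) :
  injective f -> (forall n, P (f n)) -> infinitely_many P.
Proof.
move=> f_inj Pf [s Ps].
have sub_s : {subset map f (iota 0 (size s).+1) <= s}.
  by move=> _ /mapP[n _ ->]; exact: Ps.
have uniq_f : uniq (map f (iota 0 (size s).+1)) by rewrite map_inj_uniq ?iota_uniq.
have := uniq_leq_size uniq_f sub_s.
by rewrite size_map size_iota ltnn.
Qed.

Section DiagonalPoints.

Variable F : fieldType.

Lemma diag_unit_square_rational (t : F) :
  is_square (2 : F) -> is_square (t ^+ 2 + (1 - t) ^+ 2) ->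
  unit_square_rational (t, t).
Proof.
move=> [s s2] [c c2]; split.
- by exists (s * t); rewrite exprMn -s2 mulr_natl mulr2n.
- by exists c.
- by exists c; rewrite addrC.
- by exists (s * (1 - t)); rewrite exprMn -s2 mulr_natl mulr2n.
Qed.

Definition diag_den (m : F) : F := m ^+ 2 + 4 * m + 2.

(* The legs of the Pythagorean triple (m(m+2), 2(m+1), m^2+2m+2) add up to
   [diag_den m], so [diag_param m] and [1 - diag_param m] are the legs
   divided by their sum. *)
Definition diag_param (m : F) : F := m * (m + 2) / diag_den m.

Lemma diag_param_sqr_add (m : F) : diag_den m != 0 ->
  is_square (diag_param m ^+ 2 + (1 - diag_param m) ^+ 2).
Proof.
move=> den_neq0; exists ((m ^+ 2 + 2 * m + 2) / diag_den m).
by rewrite /diag_param /diag_den in den_neq0 *; field.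
Qed.

Lemma diag_param_eq (m n : F) : diag_den m != 0 -> diag_den n != 0 ->
  diag_param m = diag_param n -> 2 * (m - n) * (m * n + m + n + 2) = 0.
Proof.
rewrite /diag_param => dm dn /eqP; rewrite eqr_div // => /eqP cross.
transitivity (m * (m + 2) * diag_den n - n * (n + 2) * diag_den m).
  by rewrite /diag_den; ring.
by rewrite cross subrr.
Qed.

Hypothesis F_char0 : [pchar F] =i pred0.

Let natf_eq0 : forall n : nat, (n%:R == 0 :> F) = (n == 0)%N :=
  (pcharf0P F).1 F_char0.

Lemma natf_inj : injective (fun n : nat => n%:R : F).
Proof.
move=> m n /= eq_mn; wlog le_mn : m n eq_mn / (m <= n)%N.
  by move=> wlog_mn; case: (leqP m n) => [|/ltnW] /wlog_mn->.
move: eq_mn; rewrite -(subnKC le_mn) natrD -{1}[m%:R]addr0 => /addrI/esym/eqP.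
by rewrite natf_eq0 => /eqP->; rewrite addn0.
Qed.

Lemma diag_den_natr_neq0 (n : nat) : diag_den n%:R != 0.
Proof.
have -> : diag_den n%:R = (n ^ 2 + 4 * n + 2)%N%:R.
  by rewrite /diag_den !natrD natrX; ring.
by rewrite natf_eq0 addn2.
Qed.

Lemma diag_param_natr_inj : injective (fun n : nat => diag_param n%:R).
Proof.
move=> m n /= /(diag_param_eq (diag_den_natr_neq0 m) (diag_den_natr_neq0 n)) /eqP.
have -> : m%:R * n%:R + m%:R + n%:R + 2 = (m * n + m + n + 2)%N%:R :> F.
  by rewrite !natrD natrM.
rewrite !mulf_eq0 subr_eq0 !natf_eq0 addn2 orbF /=.
by move=> /eqP/natf_inj.
Qed.

End DiagonalPoints.

Theorem theorem2p2 (K : fieldExtType rat)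
  (hsqrt2 : exists s : K, s ^+ 2 = 2) :
  infinitely_many (@unit_square_rational K).
Proof.
have K_char0 : [pchar K] =i pred0 := ftrans (pchar_lalg K) (pchar_num _).
have [s s2] := hsqrt2.
have diag_inj : injective (fun n : nat => let t := diag_param (n%:R : K) in (t, t)).
  by move=> m n [] /(diag_param_natr_inj K_char0).
apply: (infinitely_many_inj diag_inj) => n /=.
apply: diag_unit_square_rational; first by exists s.
exact: diag_param_sqr_add (diag_den_natr_neq0 K_char0 n).
Qed.
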